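(* Consider any run of Algorithm 1 (described in the context) under the standing assumption. For every $k\in\mathcal{K}$, if $k\in\mathcal{U}$ then $\delta_k>3(1-\eta)\epsilon_H/L_H$. Consequently, \[ \delta_k\ \ge\ \delta_{\min}:=\min\Big\{\delta_0,\ \tfrac{3\gamma_1(1-\eta)}{L_H}\,\epsilon_H\Big\}\in(0,\infty)\quad\text{for all }k\in\mathcal{K}. \]
   Context: Let $f:\mathbb{R}^n\to\mathbb{R}$ with gradient $g=\nabla f$ and Hessian $H=\nabla^2 f$; $\|\cdot\|$ is the Euclidean norm and $\lambda_{\min}(\cdot)$ the smallest eigenvalue of a symmetric matrix. Write $f_k=f(x_k)$, $g_k=g(x_k)$, $H_k=H(x_k)$ and $m_k(x):=f_k+g_k^T(x-x_k)+\tfrac12(x-x_k)^TH_k(x-x_k)$. Algorithm 1 (exact trust-region Newton method). Inputs: tolerances $\epsilon_g,\epsilon_H>0$; parameters $\gamma_1\in(0,1)$, $\gamma_2\in[1,\infty)$, $\psi\in(1/\gamma_2,1]$; $x_0\in\mathbb{R}^n$; $\delta_0>0$; $\delta_{\max}\ge\delta_0$; $\eta\in(0,1)$. For $k=0,1,2,\dots$: evaluate $g_k,H_k$; if $\|g_k\|\le\epsilon_g$, compute $\lambda_k=\lambda_{\min}(H_k)$ and, if $\lambda_k\ge-\epsilon_H$, return $x_k$ (terminate). Otherwise compute $s_k$ as a global solution of $\min_{s}\ m_k(x_k+s)+\tfrac12\epsilon_H\|s\|^2$ subject to $\|s\|\le\delta_k$. Set $\rho_k=\frac{f_k-f(x_k+s_k)}{m_k(x_k)-m_k(x_k+s_k)}$.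 If $\rho_k\ge\eta$: $x_{k+1}=x_k+s_k$, and $\delta_{k+1}=\min\{\gamma_2\delta_k,\delta_{\max}\}$ if $\|s_k\|\ge\psi\delta_k$, else $\delta_{k+1}=\delta_k$. If $\rho_k<\eta$: $x_{k+1}=x_k$ and $\delta_{k+1}=\gamma_1\|s_k\|$. $\mathcal{K}$ is the set of indices $k$ such that iteration $k$ is completed without termination; $\mathcal{U}=\{k\in\mathcal{K}:\rho_k<\eta\}$. Standing assumption: the sequence $\{f_k\}$ is bounded below by some $f_{\rm low}\in\mathbb{R}$, and all segments $[x_k,x_k+s_k]$ lie in an open set on which $f$ is twice continuously differentiable with gradient Lipschitz continuous with constant $L_g>0$ and Hessian Lipschitz continuous with constant $L_H>0$. *)

From HB Require Import structures.
From mathcomp Require Import all_boot all_order all_algebra.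
From mathcomp Require Import all_classical all_reals all_analysis.
Set Implicit Arguments. Unset Strict Implicit. Unset Printing Implicit Defensive.
Import Order.TTheory GRing.Theory Num.Theory.
Import numFieldNormedType.Exports.
Local Open Scope classical_set_scope.
Local Open Scope ring_scope.

Section TR.
Variables (R : realType) (n : nat).
Implicit Types (u v s t x y : 'cV[R]_n) (A : 'M[R]_n).

Definition dotv u v : R := \sum_(i < n) u i ord0 * v i ord0.
Definition enorm v : R := Num.sqrt (dotv v v).

Definition lambda_min A : R := inf [set a : R | eigenvalue A a].

Definition tr_model (fk : R) (gk : 'cV[R]_n) (Hk : 'M[R]_n) s : R :=
  fk + dotv gk s + 1/2 * dotv s (Hk *m s).

Definition is_tr_solution fk gk Hk (epsH delta : R) s : Prop :=
  enorm s <= delta /\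
  forall t, enorm t <= delta ->
    tr_model fk gk Hk s + epsH / 2 * enorm s ^+ 2
      <= tr_model fk gk Hk t + epsH / 2 * enorm t ^+ 2.

Definition stop_test (g : 'cV[R]_n -> 'cV[R]_n) (H : 'cV[R]_n -> 'M[R]_n)
  (epsg epsH : R) x : Prop :=
  enorm (g x) <= epsg /\ - epsH <= lambda_min (H x).

Definition inK g H epsg epsH (x : nat -> 'cV[R]_n) (k : nat) : Prop :=
  forall j, (j <= k)%N -> ~ stop_test g H epsg epsH (x j).

Definition rho_k (f : 'cV[R]_n -> R) g H (x s : nat -> 'cV[R]_n) (k : nat) : R :=
  (f (x k) - f (x k + s k)) /
  (f (x k) - tr_model (f (x k)) (g (x k)) (H (x k)) (s k)).

Definition alg1_run (f : 'cV[R]_n -> R) g H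
  (epsg epsH gamma1 gamma2 psi eta delta0 deltamax : R) (x0 : 'cV[R]_n)
  (x s : nat -> 'cV[R]_n) (delta : nat -> R) : Prop :=
  [/\ [/\ 0 < epsg, 0 < epsH, 0 < gamma1 < 1, 1 <= gamma2 & gamma2^-1 < psi <= 1],
   [/\ 0 < delta0, delta0 <= deltamax, 0 < eta < 1, x 0 = x0 & delta 0 = delta0]
   & forall k, inK g H epsg epsH x k ->
      [/\ is_tr_solution (f (x k)) (g (x k)) (H (x k)) epsH (delta k) (s k),
          eta <= rho_k f g H x s k ->
            x k.+1 = x k + s k /\
            delta k.+1 = (if psi * delta k <= enorm (s k)
                          then Num.min (gamma2 * delta k) deltamax
                          else delta k)
        & rho_k f g H x s k < eta ->
            x k.+1 = x k /\ delta k.+1 = gamma1 * enorm (s k)]].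

Definition standing_assumption (f : 'cV[R]_n -> R) g H (epsg epsH : R)
  (x s : nat -> 'cV[R]_n) (Lg LH : R) : Prop :=
  (exists flow : R, forall k, inK g H epsg epsH x k -> flow <= f (x k)) /\
  exists U : set 'cV[R]_n,
  [/\ open U /\
      (forall k, inK g H epsg epsH x k ->
         forall t : R, 0 <= t <= 1 -> U (x k + t *: s k)),
      (forall y, U y -> differentiable f y /\
                        forall v, 'd f y v = dotv (g y) v) /\
      (forall y, U y -> differentiable g y /\
                        forall v, 'd g y v = H y *m v),
      (forall y, U y -> {for y, continuous H}),
      0 < Lg /\ (forall y z, U y -> U z -> enorm (g y - g z) <= Lg * enorm (y - z))
    & 0 < LH /\ (forall y z, U y -> U z -> forall v,
                   enorm ((H y - H z) *m v) <= LH * enorm (y - z) * enorm v)].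

End TR.

(* A rejected step must be long. If s_k = 0 solved the regularized
   trust-region subproblem, then s = 0 would minimize
   g_k^T s + s^T (H_k + epsH I) s / 2 on a ball, which forces g_k = 0 and
   H_k + epsH I to be positive semidefinite, i.e. the stopping test would
   hold; so s_k <> 0. Comparing s_k with 0 shows that the predicted decrease
   is at least epsH/2 |s_k|^2, while integrating the Lipschitz bound on the
   Hessian twice along [x_k, x_k + s_k] bounds the model error by
   LH/6 |s_k|^3. A ratio rho_k < eta is then only possible when
   3 (1 - eta) epsH / LH < |s_k| <= delta_k. Since an accepted step never
   shrinks the radius and a rejected one sets it to gamma1 |s_k|, induction
   on k gives delta_k >= delta_min. *)

From HB Require Import structures.
From mathcomp Require Import all_boot all_order all_algebra.
From mathcomp Require Import all_classical all_reals all_analysis.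
From mathcomp Require Import ring lra.
Set Implicit Arguments. Unset Strict Implicit. Unset Printing Implicit Defensive.
Import Order.TTheory GRing.Theory Num.Theory.
Import numFieldNormedType.Exports.
Local Open Scope classical_set_scope.
Local Open Scope ring_scope.

Section Euclidean.
Variables (R : realType) (n : nat).
Implicit Types (u v w : 'cV[R]_n).

Lemma dotvC u v : dotv u v = dotv v u.
Proof. by apply: eq_bigr => i _; rewrite mulrC. Qed.

Lemma dotvDl u v w : dotv (u + v) w = dotv u w + dotv v w.
Proof. by rewrite /dotv -big_split; apply: eq_bigr => i _; rewrite !mxE mulrDl. Qed.

Lemma dotvZl (a : R) u w : dotv (a *: u) w = a * dotv u w.
Proof. by rewrite /dotv mulr_sumr; apply: eq_bigr => i _; rewrite !mxE mulrA. Qed.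

Lemma dotvZr (a : R) u w : dotv u (a *: w) = a * dotv u w.
Proof. by rewrite dotvC dotvZl dotvC. Qed.

Lemma dotvBl u v w : dotv (u - v) w = dotv u w - dotv v w.
Proof. by rewrite dotvDl -scaleN1r dotvZl mulN1r. Qed.

Lemma dotvBr u v w : dotv u (v - w) = dotv u v - dotv u w.
Proof. by rewrite dotvC dotvBl !(dotvC u). Qed.

Lemma dotv0l w : dotv 0 w = 0.
Proof. by rewrite /dotv big1 // => i _; rewrite mxE mul0r. Qed.

Lemma dotv_trmx u v : dotv u v = (u^T *m v) ord0 ord0.
Proof. by rewrite /dotv mxE; apply: eq_bigr => i _; rewrite mxE. Qed.

Lemma dotv_ge0 u : 0 <= dotv u u.
Proof. by apply: sumr_ge0 => i _; rewrite -expr2 sqr_ge0. Qed.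

Lemma dotv_eq0 u : (dotv u u == 0) = (u == 0).
Proof.
apply/idP/eqP => [|->]; last by rewrite dotv0l.
rewrite /dotv psumr_eq0 => [/allP u0|i _]; last by rewrite -expr2 sqr_ge0.
apply/matrixP => i j; rewrite (ord1 j) mxE.
by have := u0 i (mem_index_enum i); rewrite mulf_eq0 orbb => /eqP.
Qed.

Lemma dotv_gt0 u : (0 < dotv u u) = (u != 0).
Proof. by rewrite lt_def dotv_ge0 dotv_eq0 andbT. Qed.

Lemma dotv_sqr_le u v : dotv u v ^+ 2 <= dotv u u * dotv v v.
Proof.
have [->|v0] := eqVneq v 0; first by rewrite dotvC !dotv0l expr0n mulr0.
have vv_gt0 : 0 < dotv v v by rewrite dotv_gt0.
have := dotv_ge0 (dotv v v *: u - dotv u v *: v).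
rewrite dotvBl !dotvBr !dotvZl !dotvZr (dotvC v u).
nra.
Qed.

Lemma enorm_ge0 u : 0 <= enorm u.
Proof. exact: sqrtr_ge0. Qed.

Lemma enorm_sqr u : enorm u ^+ 2 = dotv u u.
Proof. by rewrite sqr_sqrtr // dotv_ge0. Qed.

Lemma enorm_gt0 u : (0 < enorm u) = (u != 0).
Proof. by rewrite sqrtr_gt0 dotv_gt0. Qed.

Lemma enorm0 : enorm (0 : 'cV[R]_n) = 0.
Proof. by rewrite /enorm dotv0l sqrtr0. Qed.

Lemma enormZ (a : R) u : enorm (a *: u) = `|a| * enorm u.
Proof.
by rewrite /enorm dotvZl dotvZr mulrA -expr2 sqrtrM ?sqr_ge0 // sqrtr_sqr.
Qed.

Lemma dotv_le_enorm u v : dotv u v <= enorm u * enorm v.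
Proof.
rewrite (le_trans (ler_norm _)) // -sqrtrM ?dotv_ge0 // -sqrtr_sqr.
by rewrite ler_sqrt ?mulr_ge0 ?dotv_ge0 // dotv_sqr_le.
Qed.

Lemma le_lambda_min (A : 'M[R]_n) (eps : R) : 0 <= eps ->
  (forall w, 0 <= dotv w (A *m w) + eps * dotv w w) -> - eps <= lambda_min A.
Proof.
move=> eps_ge0 form_ge0; rewrite /lambda_min.
(* [inf set0 = 0]: this is why [0 <= eps] is needed. *)
have [->|/set0P eig_ne0] := eqVneq [set a | eigenvalue A a] set0.
  by rewrite inf0 oppr_le0.
apply: lb_le_inf => // a /eigenvalueP[v vA v0].
have vv_gt0 : 0 < dotv v^T v^T by rewrite dotv_gt0 trmx_eq0.
have := form_ge0 v^T; rewrite [dotv _ (A *m _)]dotv_trmx trmxK mulmxA vA.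
rewrite -scalemxAl mxE -[v in v *m _]trmxK -dotv_trmx.
by rewrite -mulrDl pmulr_lge0 // -lerBlDr sub0r.
Qed.

End Euclidean.

Section Calculus.
Variable R : realType.

Lemma is_derive_coord n (G : R -> 'cV[R]_n) (dG : 'cV[R]_n) (t : R) i :
  is_derive t 1 G dG -> is_derive t 1 (fun u => G u i ord0) (dG i ord0).
Proof.
move=> G'; have dG_ex : derivable G t 1 by exact: ex_derive.
apply: DeriveDef; first by move/derivable_mxP: dG_ex; apply.
by have := derive_mx dG_ex; rewrite derive_val => ->; rewrite mxE.
Qed.

Lemma is_derive_dotvl n (G : R -> 'cV[R]_n) (dG s : 'cV[R]_n) (t : R) :
  is_derive t 1 G dG -> is_derive t 1 (fun u => dotv (G u) s) (dotv dG s).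
Proof.
move=> G'.
have -> : (fun u => dotv (G u) s) = \sum_(i < n) (s i ord0 *: (fun u => G u i ord0)).
  by apply/funext => u; rewrite /dotv fct_sumE; apply: eq_bigr => i _; rewrite mulrC.
apply: is_derive_eq.
  by apply: is_derive_sum => i; apply: is_deriveZ; exact: is_derive_coord.
by apply: eq_bigr => i _; rewrite mulrC.
Qed.

Lemma is_derive_along n (W : normedModType R) (F : 'cV[R]_n -> W) (x s : 'cV[R]_n) t :
  differentiable F (x + t *: s) ->
  is_derive t 1 (fun u : R => F (x + u *: s)) ('d F (x + t *: s) s).
Proof.
move=> dF.
have line : (fun u : R => x + u *: s) = cst x + ( *:%R ^~ s) by [].
have line_diff : is_diff t (cst x + ( *:%R ^~ s)) (0 + ( *:%R ^~ s)).
  exact: is_diffD.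
have dline : differentiable (fun u : R => x + u *: s) t by rewrite line; exact: ex_diff.
have dFline : differentiable (F \o (fun u : R => x + u *: s)) t.
  exact: differentiable_comp.
apply: DeriveDef; first exact: diff_derivable.
rewrite -[fun u => F _]/(F \o (fun u : R => x + u *: s)).
by rewrite deriveE // diff_comp //= line diff_val /= add0r scale1r.
Qed.

Lemma ler_increment (F G dF dG : R -> R) (a b : R) : a <= b ->
  (forall t, a <= t <= b -> is_derive t 1 F (dF t)) ->
  (forall t, a <= t <= b -> is_derive t 1 G (dG t)) ->
  (forall t, a <= t <= b -> dF t <= dG t) ->
  F b - F a <= G b - G a.
Proof.
move=> ab F' G' dF_le.
have FG' t : a <= t <= b -> is_derive t 1 (F - G) (dF t - dG t).
  by move=> tab; exact: is_deriveB (F' t tab) (G' t tab).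
have FG_cont : {within `[a, b], continuous (F - G)}.
  apply: derivable_within_continuous => t; rewrite in_itv /= => /FG' FGt.
  exact: ex_derive.
have FG'_oo t : t \in `]a, b[ -> is_derive t 1 (F - G) (dF t - dG t).
  by rewrite in_itv /= => /andP[/ltW a_t /ltW t_b]; apply: FG'; rewrite a_t t_b.
have [c] := MVT_segment ab FG'_oo FG_cont.
rewrite in_itv /= => /dF_le dFG_le FG_incr.
have : (F - G) b - (F - G) a <= 0.
  by rewrite FG_incr mulr_le0_ge0 ?subr_le0 ?subr_ge0.
rewrite !fctE; lra.
Qed.

End Calculus.

Section CubicModelError.
Variables (R : realType) (n : nat) (f : 'cV[R]_n -> R) (g : 'cV[R]_n -> 'cV[R]_n).
Variables (H : 'cV[R]_n -> 'M[R]_n) (U : set 'cV[R]_n) (LH : R).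
Hypothesis f_grad :
  forall y, U y -> differentiable f y /\ forall v, 'd f y v = dotv (g y) v.
Hypothesis g_hess :
  forall y, U y -> differentiable g y /\ forall v, 'd g y v = H y *m v.
Hypothesis H_lipschitz : forall y z, U y -> U z -> forall v,
  enorm ((H y - H z) *m v) <= LH * enorm (y - z) * enorm v.

Lemma tr_model_error x s : (forall t, 0 <= t <= 1 -> U (x + t *: s)) ->
  f (x + s) - tr_model (f x) (g x) (H x) s <= LH / 6 * enorm s ^+ 3.
Proof.
move=> segU.
have U0 : U (x + 0 *: s) by apply: segU; rewrite lexx ler01.
pose c := LH * enorm s ^+ 3.
pose phi (u : R) := f (x + u *: s).
pose p (u : R) := dotv (g (x + u *: s)) s.
pose q (u : R) := dotv (H (x + u *: s) *m s) s.
have phi' (t : R) : 0 <= t <= 1 -> is_derive t 1 phi (p t).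
  by move=> /segU /f_grad[df f'_eq]; rewrite /p -f'_eq; exact: is_derive_along.
have p' (t : R) : 0 <= t <= 1 -> is_derive t 1 p (q t).
  move=> /segU /g_hess[dg g'_eq]; rewrite /q -g'_eq.
  by apply: is_derive_dotvl; exact: is_derive_along.
have q_lip (t : R) : 0 <= t <= 1 -> q t - q 0 <= c * t.
  move=> t01; have /andP[t0 _] := t01.
  rewrite /q -dotvBl -mulmxBl dotvC (le_trans (dotv_le_enorm _ _)) //.
  rewrite (le_trans (ler_wpM2l (enorm_ge0 _) (H_lipschitz (segU _ t01) U0 s))) //.
  rewrite scale0r addr0 addrAC subrr add0r enormZ ger0_norm // /c; lra.
have p_bound (t : R) : 0 <= t <= 1 -> p t - p 0 <= t * q 0 + c / 2 * t ^+ 2.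
  move=> /andP[t0 t1].
  have sub01 (u : R) : 0 <= u <= t -> 0 <= u <= 1.
    by case/andP=> u0 ut; rewrite u0 (le_trans ut t1).
  pose G (u : R) := u * q 0 + c / 2 * u ^+ 2.
  suff : p t - p 0 <= G t - G 0 by rewrite /G; lra.
  apply: (ler_increment (G := G) (dF := q) (dG := fun u => q 0 + c * u) t0).
  - by move=> u /sub01 /p'.
  - by move=> u _; apply: is_derive_eq; rewrite /GRing.scale /=; lra.
  - by move=> u /sub01 /q_lip; lra.
have phi_bound : phi 1 - phi 0 <= p 0 + q 0 / 2 + c / 6.
  pose G (u : R) := u * p 0 + q 0 / 2 * u ^+ 2 + c / 6 * u ^+ 3.
  suff : phi 1 - phi 0 <= G 1 - G 0 by rewrite /G; lra.
  apply: (ler_increment (G := G) (dF := p)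
    (dG := fun u => p 0 + u * q 0 + c / 2 * u ^+ 2) ler01 phi').
  - by move=> u _; apply: is_derive_eq; rewrite /GRing.scale /=; lra.
  - by move=> u /p_bound; lra.
move: phi_bound; rewrite /phi /p /q /c /tr_model scale1r scale0r addr0 (dotvC s).
lra.
Qed.

End CubicModelError.

Lemma linear_coef_ge0 (R : realType) (a b t0 : R) : 0 < t0 ->
  (forall t, 0 < t <= t0 -> 0 <= t * a + t ^+ 2 * b) -> 0 <= a.
Proof.
move=> t0_gt0 ray; rewrite leNgt; apply/negP => a_lt0.
have b1_gt0 : 0 < `|b| + 1 by rewrite ltr_wpDl.
pose t := Num.min t0 (- a / (`|b| + 1)).
have t_gt0 : 0 < t by rewrite lt_min t0_gt0 divr_gt0 // oppr_gt0.
have tb_lt : t * `|b| < - a.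
  have : t <= - a / (`|b| + 1) by rewrite ge_min lexx orbT.
  rewrite ler_pdivlMr //; lra.
have := ray t; rewrite t_gt0 ge_min lexx /= => /(_ isT).
have : t ^+ 2 * b <= t ^+ 2 * `|b| by rewrite ler_wpM2l ?sqr_ge0 ?ler_norm.
nra.
Qed.

Section RegularizedModel.
Variables (R : realType) (n : nat) (fk : R) (gk : 'cV[R]_n) (Hk : 'M[R]_n) (eps : R).

Lemma tr_model0 : tr_model fk gk Hk 0 = fk.
Proof. by rewrite /tr_model mulmx0 (dotvC gk) !dotv0l mulr0 !addr0. Qed.

Lemma tr_reg_model_scale (b : R) w :
  tr_model fk gk Hk (b *: w) + eps / 2 * enorm (b *: w) ^+ 2 - fk =
  b * dotv gk w + b ^+ 2 * ((dotv w (Hk *m w) + eps * dotv w w) / 2).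
Proof. by rewrite /tr_model enorm_sqr -scalemxAr !dotvZl !dotvZr expr2; field. Qed.

Lemma tr_solution_decrease delta s : 0 <= delta ->
  is_tr_solution fk gk Hk eps delta s ->
  tr_model fk gk Hk s + eps / 2 * enorm s ^+ 2 <= fk.
Proof.
move=> delta_ge0 [_ s_min].
by have := s_min 0; rewrite enorm0 tr_model0 expr0n /= mulr0 addr0; apply.
Qed.

Section ZeroSolution.
Variable delta : R.
Hypotheses (delta_gt0 : 0 < delta) (sol0 : is_tr_solution fk gk Hk eps delta 0).

Lemma tr_solution0_ray w : exists2 t0, 0 < t0 & forall t, 0 < t <= t0 ->
  0 <= t * dotv gk w + t ^+ 2 * ((dotv w (Hk *m w) + eps * dotv w w) / 2).
Proof.
have w1_gt0 : 0 < enorm w + 1 by rewrite ltr_wpDl ?enorm_ge0.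
exists (delta / (enorm w + 1)); first by rewrite divr_gt0.
move=> t /andP[t_gt0]; rewrite ler_pdivlMr // => t_le.
rewrite -tr_reg_model_scale subr_ge0.
have := sol0.2 (t *: w); rewrite enorm0 tr_model0 expr0n /= mulr0 addr0; apply.
by rewrite enormZ gtr0_norm //; lra.
Qed.

Lemma tr_solution0_grad : gk = 0.
Proof.
have [t0 t0_gt0 /(linear_coef_ge0 t0_gt0)] := tr_solution0_ray ((-1) *: gk).
rewrite dotvZr mulN1r oppr_ge0 => gg_le0.
by apply/eqP; rewrite -dotv_eq0 eq_le gg_le0 dotv_ge0.
Qed.

Lemma tr_solution0_curvature w : 0 <= dotv w (Hk *m w) + eps * dotv w w.
Proof.
have [t0 t0_gt0 /(_ t0)] := tr_solution0_ray w.
rewrite t0_gt0 lexx tr_solution0_grad dotv0l mulr0 add0r => /(_ isT).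
by rewrite pmulr_rge0 ?exprn_gt0 // pmulr_lge0 ?invr_gt0.
Qed.

Lemma tr_solution0_stop epsg : 0 <= epsg -> 0 <= eps ->
  enorm gk <= epsg /\ - eps <= lambda_min Hk.
Proof.
move=> epsg_ge0 eps_ge0; rewrite tr_solution0_grad enorm0; split=> //.
exact: le_lambda_min eps_ge0 tr_solution0_curvature.
Qed.

End ZeroSolution.

Lemma tr_solution_neq0 epsg delta s : 0 <= epsg -> 0 <= eps -> 0 < delta ->
  is_tr_solution fk gk Hk eps delta s ->
  ~ (enorm gk <= epsg /\ - eps <= lambda_min Hk) -> s != 0.
Proof.
move=> epsg_ge0 eps_ge0 delta_gt0 sol no_stop; apply/eqP => s0.
rewrite s0 in sol; exact: no_stop (tr_solution0_stop delta_gt0 sol epsg_ge0 eps_ge0).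
Qed.

End RegularizedModel.

Lemma rejected_step_length_gt (R : realType) (fk fnext mk S eps eta LH : R) :
  0 < S -> 0 < eps -> 0 < LH -> eta < 1 ->
  mk + eps / 2 * S ^+ 2 <= fk -> fnext - mk <= LH / 6 * S ^+ 3 ->
  (fk - fnext) / (fk - mk) < eta -> 3 * (1 - eta) * eps / LH < S.
Proof.
move=> S_gt0 eps_gt0 LH_gt0 eta_lt1 decrease error ratio.
have decrease_gt0 : 0 < eps / 2 * S ^+ 2 by rewrite mulr_gt0 ?divr_gt0 ?exprn_gt0.
have pred_gt0 : 0 < fk - mk by lra.
rewrite ltr_pdivrMr // in ratio.
have : (1 - eta) * (eps / 2 * S ^+ 2) <= (1 - eta) * (fk - mk).
  by rewrite ler_wpM2l; lra.
rewrite ltr_pdivrMr // -(@ltr_pM2r _ (S ^+ 2 / 6)) ?divr_gt0 ?exprn_gt0 //.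
lra.
Qed.

Section Algorithm1.
Variables (R : realType) (n : nat) (f : 'cV[R]_n -> R).
Variables (g : 'cV[R]_n -> 'cV[R]_n) (H : 'cV[R]_n -> 'M[R]_n).
Variables (epsg epsH gamma1 gamma2 psi eta delta0 deltamax Lg LH : R).
Variables (x0 : 'cV[R]_n) (x s : nat -> 'cV[R]_n) (delta : nat -> R).
Hypothesis run :
  alg1_run f g H epsg epsH gamma1 gamma2 psi eta delta0 deltamax x0 x s delta.
Hypothesis standing : standing_assumption f g H epsg epsH x s Lg LH.

Local Notation completed k := (inK g H epsg epsH x k).
Local Notation rho k := (rho_k f g H x s k).

Lemma inK_pred k : completed k.+1 -> completed k.
Proof. by move=> Kk1 j jk; apply: Kk1; exact: leqW. Qed.

Lemma LH_gt0 : 0 < LH.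
Proof. by case: standing => _ [U [_ _ _ _ []]]. Qed.

Lemma rejected_step_long k : completed k -> 0 < delta k -> rho k < eta ->
  3 * (1 - eta) * epsH / LH < enorm (s k).
Proof.
have [[epsg_gt0 epsH_gt0 _ _ _] [_ _ /andP[_ eta_lt1] _ _] step] := run.
have [_ [U [[_ segU] [f_grad g_hess] _ _ [_ H_lip]]]] := standing.
move=> Kk delta_gt0 rho_lt; have [sol _ _] := step k Kk.
apply: (rejected_step_length_gt _ epsH_gt0 LH_gt0 eta_lt1 _ _ rho_lt).
- rewrite enorm_gt0 (tr_solution_neq0 (ltW epsg_gt0) (ltW epsH_gt0) delta_gt0 sol) //.
  exact: Kk k (leqnn k).
- exact: tr_solution_decrease (ltW delta_gt0) sol.
- exact: (tr_model_error f_grad g_hess H_lip (segU k Kk)).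
Qed.

Let delta_min := Num.min delta0 (3 * gamma1 * (1 - eta) / LH * epsH).

Lemma delta_min_gt0 : 0 < delta_min.
Proof.
have [[_ epsH_gt0 /andP[gamma1_gt0 _] _ _] [delta0_gt0 _ /andP[_ eta_lt1] _ _] _]
  := run.
rewrite lt_min delta0_gt0 mulr_gt0 // divr_gt0 ?LH_gt0 // mulr_gt0 ?subr_gt0 //.
by rewrite mulr_gt0.
Qed.

Lemma delta_ge_min k : completed k -> delta_min <= delta k.
Proof.
have [[_ _ /andP[gamma1_gt0 _] gamma2_ge1 _] [_ delta0_le _ _ delta_0] step] := run.
elim: k => [_|k IH Kk1]; first by rewrite delta_0 ge_min lexx.
have Kk := inK_pred Kk1; have dk := IH Kk.
have delta_gt0 := lt_le_trans delta_min_gt0 dk.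
have [_ accept reject] := step k Kk.
have [rho_ge|rho_lt] := leP eta (rho k).
  have [_ ->] := accept rho_ge; case: ifP => // _.
  rewrite le_min (le_trans dk) ?ler_peMl ?(ltW delta_gt0) //=.
  by rewrite (le_trans _ delta0_le) // ge_min lexx.
have [_ ->] := reject rho_lt.
have s_gt := rejected_step_long Kk delta_gt0 rho_lt.
rewrite /delta_min ge_min; apply/orP; right.
have -> : 3 * gamma1 * (1 - eta) / LH * epsH = gamma1 * (3 * (1 - eta) * epsH / LH).
  by field; rewrite lt0r_neq0 ?LH_gt0.
by rewrite ler_pM2l //; exact: ltW.
Qed.

End Algorithm1.

Theorem lemma2p2 (R : realType) (n : nat) (f : 'cV[R]_n -> R)
  (g : 'cV[R]_n -> 'cV[R]_n) (H : 'cV[R]_n -> 'M[R]_n)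
  (epsg epsH gamma1 gamma2 psi eta delta0 deltamax Lg LH : R)
  (x0 : 'cV[R]_n) (x s : nat -> 'cV[R]_n) (delta : nat -> R) :
  alg1_run f g H epsg epsH gamma1 gamma2 psi eta delta0 deltamax x0 x s delta ->
  standing_assumption f g H epsg epsH x s Lg LH ->
  let delta_min := Num.min delta0 (3 * gamma1 * (1 - eta) / LH * epsH) in
  0 < delta_min /\
  forall k, inK g H epsg epsH x k ->
    (rho_k f g H x s k < eta -> 3 * (1 - eta) * epsH / LH < delta k) /\
    delta_min <= delta k.
Proof.
move=> run standing delta_min.
split=> [|k Kk]; first exact: delta_min_gt0 run standing.
have delta_k_ge := delta_ge_min run standing Kk.
have delta_k_gt0 := lt_le_trans (delta_min_gt0 run standing) delta_k_ge.
split=> // rho_lt.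
have [_ _ /(_ k Kk) [[s_le _] _ _]] := run.
exact: lt_le_trans (rejected_step_long run standing Kk delta_k_gt0 rho_lt) s_le.
Qed.
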